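(* Let $\nu>0$, $\Delta t>0$, $\delta\in(0,1)$, and let $k$ be a time level at which the time step bound $$\Delta t\le\frac{\delta}{2\nu}\Big[\max_{i=1,\dots,N}\sum_{j\ne i}V_j\frac{|\dot w_h(|x^k_i-x^k_j|)|}{|x^k_i-x^k_j|}\Big]^{-1}$$ holds. Then for every $\Lambda\subset I_N$ and every $\phi\in V^k(\Lambda)^d$, $$\|\Delta_h\phi\|_{2,\Lambda}^2\le\frac{2\delta}{\Delta t\,\nu}\,|\phi|_{1,k,\Lambda}^2,$$ where $(\Delta_h\phi)_i=2\sum_{j\in\Lambda\setminus\{i\}}V_j\frac{\phi_i-\phi_j}{|x^k_i-x^k_j|}\frac{x^k_i-x^k_j}{|x^k_i-x^k_j|}\cdot\nabla w_h(|x^k_i-x^k_j|)$ for $i\in\Lambda$.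
   Context: Let $d\in\{2,3\}$. Reference weight function $w\in C^2([0,\infty))$ with some $r_0>0$: $w>0$ on $(0,r_0)$, $w=0$ on $[r_0,\infty)$, $\dot w<0$ on $(0,r_0)$, $\dot w(0)=0$, $\dot w=0$ on $[r_0,\infty)$, $\int_{\mathbb{R}^d}w(|x|)dx=1$. For $h>0$, $w_h(r)=h^{-d}w(r/h)$ with derivative $\dot w_h$; for $x\ne y$, $\nabla w_h(|x-y|)=\dot w_h(|x-y|)\frac{x-y}{|x-y|}$. $N\in\mathbb{N}$, $I_N=\{1,\dots,N\}$, particle volumes $V_1,\dots,V_N>0$, pairwise distinct particle positions $x^k_1,\dots,x^k_N\in\mathbb{R}^d$. $V^k(\Lambda)^m$ is the space of $\mathbb{R}^m$-valued functions on $\{x^k_i\}_{i\in\Lambda}$ (values $\phi_i$). Discrete $L^2$ norm $\|\phi\|_{2,\Lambda}=(\sum_{i\in\Lambda}V_i|\phi_i|^2)^{1/2}$; discrete semi-norm $|\phi|_{1,k,\Lambda}=\big(\sum_{i\in\Lambda}V_i\sum_{j\in\Lambda\setminus\{i\}}V_j\frac{|\phi_i-\phi_j|^2}{|x^k_i-x^k_j|}|\dot w_h(|x^k_i-x^k_j|)|\big)^{1/2}$. *)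

From HB Require Import structures.
From mathcomp Require Import all_boot all_order all_algebra.
From mathcomp Require Import all_classical all_reals all_analysis.
Set Implicit Arguments. Unset Strict Implicit. Unset Printing Implicit Defensive.
Import Order.TTheory GRing.Theory Num.Theory numFieldNormedType.Exports.
Local Open Scope ring_scope.

Section Defs.
Variable R : realType.

Definition dotp (d : nat) (u v : 'rV[R]_d) : R := \sum_(k < d) u 0 k * v 0 k.
Definition enorm (d : nat) (u : 'rV[R]_d) : R := Num.sqrt (dotp u u).

Definition wh (d : nat) (w : R -> R) (h : R) (r : R) : R := h ^- d * w (r / h).
Definition dwh (d : nat) (w : R -> R) (h : R) : R -> R := derive1 (wh d w h).

Definition grad_wh (d : nat) (w : R -> R) (h : R) (x y : 'rV[R]_d) : 'rV[R]_d :=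
  (dwh d w h (enorm (x - y)) / enorm (x - y)) *: (x - y).

(* Surface area of the unit sphere S^{d-1} for d = 2, 3. *)
Definition sphere_area (d : nat) : R := if d == 2%N then 2 * pi else 4 * pi.

(* The reference weight function assumptions (w : R -> R; only its values on
   [0, oo) matter; C^2 regularity is required on all of R). *)
Definition ref_weight (d : nat) (w : R -> R) (r0 : R) : Prop :=
  0 < r0 /\
      ((forall r, derivable w r 1) /\ (forall r, derivable (derive1 w) r 1)
        /\ continuous (derive1 (derive1 w) : R -> R)) /\
      (forall r, 0 < r < r0 -> 0 < w r) /\
      (forall r, r0 <= r -> w r = 0) /\
      (forall r, 0 < r < r0 -> derive1 w r < 0) /\
      derive1 w 0 = 0 /\
      (forall r, r0 <= r -> derive1 w r = 0) /\
      (* \int_{R^d} w(|x|) dx = 1, written in polar coordinates *)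
      (\int[lebesgue_measure]_(r in `[0%R, r0%R]%classic)
          (sphere_area d * w r * r ^+ d.-1)%:E = 1%E)%E.

Definition l2sq (d N : nat) (V : 'I_N -> R) (L : {set 'I_N}) (phi : 'I_N -> 'rV[R]_d) : R :=
  \sum_(i in L) V i * dotp (phi i) (phi i).

Definition h1sq (d N : nat) (w : R -> R) (h : R) (V : 'I_N -> R)
  (x : 'I_N -> 'rV[R]_d) (L : {set 'I_N}) (phi : 'I_N -> 'rV[R]_d) : R :=
  \sum_(i in L) V i * \sum_(j in L :\ i)
     V j * dotp (phi i - phi j) (phi i - phi j) / enorm (x i - x j)
         * `| dwh d w h (enorm (x i - x j)) |.

Definition lap (d N : nat) (w : R -> R) (h : R) (V : 'I_N -> R)
  (x : 'I_N -> 'rV[R]_d) (L : {set 'I_N}) (phi : 'I_N -> 'rV[R]_d) (i : 'I_N) : 'rV[R]_d :=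
  2 *: \sum_(j in L :\ i)
     (V j / enorm (x i - x j) *
       dotp ((enorm (x i - x j))^-1 *: (x i - x j)) (grad_wh w h (x i) (x j)))
       *: (phi i - phi j).

Definition Mstab (d N : nat) (w : R -> R) (h : R) (V : 'I_N -> R)
  (x : 'I_N -> 'rV[R]_d) : R :=
  \big[Num.max/0]_(i < N) \sum_(j < N | j != i)
     V j * `| dwh d w h (enorm (x i - x j)) | / enorm (x i - x j).

End Defs.

From HB Require Import structures.
From mathcomp Require Import all_boot all_order all_algebra.
From mathcomp Require Import all_classical all_reals all_analysis.
From mathcomp Require Import ring.
Set Implicit Arguments. Unset Strict Implicit. Unset Printing Implicit Defensive.
Import Order.TTheory GRing.Theory Num.Theory.
Local Open Scope ring_scope.

(* Writing (Delta_h phi)_i = 2 sum_j c_ij (phi_i - phi_j) with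
   |c_ij| = V_j |w_h'(r_ij)| / r_ij, a weighted Cauchy-Schwarz inequality gives
   |(Delta_h phi)_i|^2 <= 4 (sum_j |c_ij|) (sum_j |c_ij| |phi_i - phi_j|^2).
   The first factor is at most the stability constant M, and summing the
   second against V_i yields |phi|_{1,k,Lambda}^2; hence
   ||Delta_h phi||^2 <= 4 M |phi|^2, and the time step bound says exactly
   4 M <= 2 delta / (dt nu). *)

Section WeightedCauchySchwarz.
Variables (R : realFieldType) (I : finType) (P : pred I).

Lemma sqr_wsum_le (a y : I -> R) :
  (forall j, P j -> 0 <= a j) ->
  (\sum_(j | P j) a j * y j) ^+ 2 <=
  (\sum_(j | P j) a j) * (\sum_(j | P j) a j * y j ^+ 2).
Proof.
move=> a_ge0.
set A := \sum_(j | P j) a j; set B := \sum_(j | P j) a j * y j ^+ 2.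
set S := \sum_(j | P j) a j * y j.
have BA_SS : \sum_(j | P j) \sum_(l | P l)
    (a j * y j ^+ 2 * a l - a j * y j * (a l * y l)) = B * A - S * S.
  rewrite /B /S !mulr_suml -sumrB; apply: eq_bigr => j _.
  by rewrite !mulr_sumr -sumrB.
have lagrange : \sum_(j | P j) \sum_(l | P l) a j * a l * (y j - y l) ^+ 2 =
    2 * (A * B - S ^+ 2).
  transitivity (\sum_(j | P j) \sum_(l | P l)
      (a j * y j ^+ 2 * a l - a j * y j * (a l * y l)) +
    \sum_(j | P j) \sum_(l | P l)
      (a l * y l ^+ 2 * a j - a l * y l * (a j * y j))).
    rewrite -big_split; apply: eq_bigr => j _; rewrite -big_split.
    by apply: eq_bigr => l _ /=; ring.
  rewrite [X in _ + X]exchange_big /= BA_SS; ring.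
have : 0 <= \sum_(j | P j) \sum_(l | P l) a j * a l * (y j - y l) ^+ 2.
  apply: sumr_ge0 => j Pj; apply: sumr_ge0 => l Pl.
  by rewrite mulr_ge0 ?sqr_ge0 // mulr_ge0 ?a_ge0.
by rewrite lagrange pmulr_rge0 // subr_ge0; apply.
Qed.

Lemma sqr_sum_le_dominated (a c y : I -> R) :
  (forall j, P j -> `|c j| <= a j) ->
  (\sum_(j | P j) c j * y j) ^+ 2 <=
  (\sum_(j | P j) a j) * (\sum_(j | P j) a j * y j ^+ 2).
Proof.
move=> c_le_a.
have a_ge0 j : P j -> 0 <= a j by move=> Pj; exact: le_trans (c_le_a j Pj).
have sum_le : `|\sum_(j | P j) c j * y j| <= \sum_(j | P j) a j * `|y j|.
  apply: le_trans (ler_norm_sum _ _ _) _; apply: ler_sum => j Pj.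
  by rewrite normrM ler_wpM2r ?c_le_a.
rewrite -real_normK ?num_real //.
under [X in _ <= _ * X]eq_bigr => j _ do rewrite -real_normK ?num_real //.
apply: le_trans (sqr_wsum_le (fun j => `|y j|) a_ge0).
by rewrite lerXn2r ?nnegrE // (le_trans _ sum_le).
Qed.

End WeightedCauchySchwarz.

Section EuclideanRow.
Variables (R : realType) (d : nat).
Implicit Types (u v : 'rV[R]_d) (k : R).

Lemma dotpZl k u v : dotp (k *: u) v = k * dotp u v.
Proof. by rewrite /dotp mulr_sumr; apply: eq_bigr => i _; rewrite mxE mulrA. Qed.

Lemma dotpZr k u v : dotp u (k *: v) = k * dotp u v.
Proof. by rewrite /dotp mulr_sumr; apply: eq_bigr => i _; rewrite mxE mulrCA. Qed.

Lemma dotp_ge0 u : 0 <= dotp u u.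
Proof. by apply: sumr_ge0 => i _; rewrite -expr2 sqr_ge0. Qed.

Lemma enorm_sqr u : enorm u ^+ 2 = dotp u u.
Proof. by rewrite sqr_sqrtr ?dotp_ge0. Qed.

Lemma dotp_sum_le (I : finType) (P : pred I) (a c : I -> R) (v : I -> 'rV[R]_d) :
  (forall j, P j -> `|c j| <= a j) ->
  dotp (\sum_(j | P j) c j *: v j) (\sum_(j | P j) c j *: v j) <=
  (\sum_(j | P j) a j) * \sum_(j | P j) a j * dotp (v j) (v j).
Proof.
move=> c_le_a; rewrite /dotp.
have coordE m : (\sum_(j | P j) c j *: v j) 0 m = \sum_(j | P j) c j * v j 0 m.
  by rewrite summxE; apply: eq_bigr => j _; rewrite mxE.
under eq_bigr => m _ do rewrite coordE -expr2.
under [X in _ <= _ * X]eq_bigr => j _ do rewrite mulr_sumr.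
rewrite exchange_big mulr_sumr /=; apply: ler_sum => m _.
under [X in _ <= _ * X]eq_bigr => j _ do rewrite -expr2.
exact: sqr_sum_le_dominated.
Qed.

End EuclideanRow.

Section DiscreteLaplacian.
Variables (R : realType) (d N : nat) (w : R -> R) (h : R).
Variables (V : 'I_N -> R) (x : 'I_N -> 'rV[R]_d).
Hypothesis V_ge0 : forall j, 0 <= V j.
Variables (L : {set 'I_N}) (phi : 'I_N -> 'rV[R]_d).

Local Notation r i j := (enorm (x i - x j)).

Definition kernel_weight (i j : 'I_N) : R := V j * `|dwh d w h (r i j)| / r i j.

Lemma kernel_weight_ge0 i j : 0 <= kernel_weight i j.
Proof. by rewrite /kernel_weight !mulr_ge0 ?invr_ge0 ?sqrtr_ge0. Qed.

Definition h1_row (i : 'I_N) : R :=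
  \sum_(j in L :\ i) V j * dotp (phi i - phi j) (phi i - phi j) / r i j
                     * `|dwh d w h (r i j)|.

Lemma h1_row_ge0 i : 0 <= h1_row i.
Proof. by apply: sumr_ge0 => j _; rewrite !mulr_ge0 ?invr_ge0 ?sqrtr_ge0 ?dotp_ge0. Qed.

Lemma h1sq_ge0 : 0 <= h1sq w h V x L phi.
Proof. by apply: sumr_ge0 => i _; rewrite mulr_ge0 ?h1_row_ge0. Qed.

Lemma sum_kernel_weight_le_Mstab i :
  \sum_(j in L :\ i) kernel_weight i j <= Mstab w h V x.
Proof.
apply: le_trans (le_bigmax _ (fun i => \sum_(j < N | j != i) kernel_weight i j) i).
rewrite [leLHS]big_mkcond [leRHS]big_mkcond /=; apply: ler_sum => j _.
rewrite in_setD1; case: (j != i) => //=.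
by case: (j \in L); rewrite ?kernel_weight_ge0.
Qed.

(* Unconditional thanks to the factor 1 / r i j: if r i j = 0 both
   coefficients vanish, as 0^-1 = 0. *)
Lemma lapE i : lap w h V x L phi i =
  2 *: \sum_(j in L :\ i) (V j / r i j * dwh d w h (r i j)) *: (phi i - phi j).
Proof.
congr (_ *: _); apply: eq_bigr => j _; congr (_ *: _).
rewrite /grad_wh dotpZl dotpZr -enorm_sqr.
have [->|r_neq0] := eqVneq (r i j) 0; first by rewrite invr0 !(mulr0, mul0r).
by field.
Qed.

Lemma dotp_lap_le i :
  dotp (lap w h V x L phi i) (lap w h V x L phi i) <=
  4 * (\sum_(j in L :\ i) kernel_weight i j) * h1_row i.
Proof.
have four : 2 * 2 = 4 :> R by ring.
have h1_rowE : h1_row i = \sum_(j in L :\ i)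
    kernel_weight i j * dotp (phi i - phi j) (phi i - phi j).
  by apply: eq_bigr => j _; rewrite /kernel_weight; ring.
rewrite lapE dotpZl dotpZr mulrA four -mulrA ler_pM2l // h1_rowE.
apply: dotp_sum_le => j _.
by rewrite /kernel_weight normrM ger0_norm ?divr_ge0 ?sqrtr_ge0 // mulrAC.
Qed.

Lemma l2sq_lap_le :
  l2sq V L (lap w h V x L phi) <= 4 * Mstab w h V x * h1sq w h V x L phi.
Proof.
rewrite /h1sq mulr_sumr; apply: ler_sum => i _.
rewrite mulrCA; apply: ler_wpM2l => //.
apply: le_trans (dotp_lap_le i) _; apply: ler_wpM2r; first exact: h1_row_ge0.
by rewrite ler_pM2l ?sum_kernel_weight_le_Mstab.
Qed.

End DiscreteLaplacian.

Theorem lemma5 (R : realType) (d : nat) (hd : d = 2%N \/ d = 3%N)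
  (w : R -> R) (r0 : R) (hw : ref_weight d w r0)
  (h : R) (hh : 0 < h)
  (N : nat) (V : 'I_N -> R) (hV : forall i, 0 < V i)
  (x : 'I_N -> 'rV[R]_d) (hx : injective x)
  (nu dt delta : R) (hnu : 0 < nu) (hdt : 0 < dt) (hdl : 0 < delta < 1)
  (hstep : 2 * nu * dt * Mstab w h V x <= delta) :
  forall (L : {set 'I_N}) (phi : 'I_N -> 'rV[R]_d),
    l2sq V L (lap w h V x L phi)
      <= 2 * delta / (dt * nu) * h1sq w h V x L phi.
Proof.
move=> L phi.
have V_ge0 j : 0 <= V j by exact: ltW.
apply: le_trans (l2sq_lap_le w h x V_ge0 L phi) _.
apply: ler_wpM2r; first exact: (h1sq_ge0 w h x V_ge0).
rewrite ler_pdivlMr ?mulr_gt0 //.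
have -> : 4 * Mstab w h V x * (dt * nu) = 2 * (2 * nu * dt * Mstab w h V x).
  by ring.
by rewrite ler_pM2l.
Qed.
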